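(* Consider the online asynchronous testing setting with conflict sets described in the context, with test levels $\alpha_j\ge0$ that are $\mathcal{F}^{-\mathcal{X}^j}$-measurable for every $j$. Suppose that for every $t\in\mathcal{H}^0$ and every $u\in[0,1]$, $\mathbb{P}(P_t\le u\mid\mathcal{F}^{-\mathcal{X}^{E_t}})\le u$. Then, for every $t\in\mathbb{N}$, if $\mathrm{FDP}^*(t)\le\alpha$ almost surely, where $$\mathrm{FDP}^*(t)=\frac{\sum_{j\le t,\ j\in\mathcal{H}^0}\alpha_j}{(\sum_{j:\,E_j\le t}R_j)\vee1},$$ then $\mathrm{mFDR}(t)\le\alpha$.
   Context: Hypotheses $H_1,H_2,\dots$ are tested; the test of $H_t$ starts at step $t$, is run at level $\alpha_t$ (and possibly with a candidacy threshold $\lambda_t\in[\alpha_t,1)$), and produces a $p$-value $P_t$. $\mathcal{H}^0$ is the fixed set of indices of true nulls. Test $t$ has a fixed decision time $E_t\ge t$. $R_t=\mathbf{1}\{P_t\le\alpha_t\}$, $C_t=\mathbf{1}\{P_t\le\lambda_t\}$. $\{L_t\}$ is a fixed sequence of nonnegative integer lags with $L_{t+1}\le L_t+1$; the conflict set is $\mathcal{X}^t=\{i\in[t-1]:E_i\ge t\}\cup(\{t-L_t,\dots,t-1\}\cap[t-1])$. $\mathcal{F}^{-\mathcal{X}^t}$ denotes either $\sigma(R_i:i\le t-1,\ i\notin\mathcal{X}^t)$ or $\sigma(R_i,C_i:i\le t-1,\ i\notin\mathcal{X}^t)$. $\mathcal{R}(t)=\{i\in[t]:E_i\le t,\ P_i\le\alpha_i\}$,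 $\mathcal{V}(t)=\mathcal{R}(t)\cap\mathcal{H}^0$, $\mathrm{mFDR}(t)=\mathbb{E}|\mathcal{V}(t)|/\mathbb{E}[|\mathcal{R}(t)|\vee1]$. *)

From HB Require Import structures.
From mathcomp Require Import all_boot all_order all_algebra.
From mathcomp Require Import all_classical all_reals all_analysis.
Set Implicit Arguments. Unset Strict Implicit. Unset Printing Implicit Defensive.
Import Order.TTheory GRing.Theory Num.Theory.
Local Open Scope classical_set_scope.
Local Open Scope ring_scope.

(* Hypotheses are indexed by positive integers 1, 2, ... ; index 0 is unused. *)

(* i is NOT in the conflict set X^t (and i in [t-1]):
   1 <= i <= t-1, E_i < t and i < t - L_t. *)
Definition not_conflict (E L : nat -> nat) (t i : nat) : bool :=
  [&& (1 <= i)%N, (i < t)%N, (E i < t)%N & (i + L t < t)%N].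

(* F^{-X^t}: sigma-algebra generated by R_i (and, if withC, also C_i)
   for i <= t-1, i notin X^t.  sigma(R_i) is generated by the event {P_i <= alpha_i}. *)
Definition F_minusX {d} {T : measurableType d} {R : realType}
  (withC : bool) (E L : nat -> nat) (pv lev lam : nat -> T -> R) (t : nat)
  : set (set T) :=
  <<s [set A | exists i, not_conflict E L t i /\
        (A = [set x | pv i x <= lev i x] \/
         (withC /\ A = [set x | pv i x <= lam i x]))] >>.

Definition measurable_wrt {d} {T : measurableType d} {R : realType}
  (G : set (set T)) (f : T -> R) : Prop :=
  forall B : set R, measurable B -> G (f @^-1` B).

Definition numR {T} {R : realType} (E : nat -> nat) (pv lev : nat -> T -> R)
  (t : nat) (x : T) : R :=
  (\sum_(1 <= i < t.+1 | (E i <= t)%N) (((pv i x <= lev i x)%R : bool) : nat)%:R).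

Definition numV {T} {R : realType} (H0 : pred nat) (E : nat -> nat)
  (pv lev : nat -> T -> R) (t : nat) (x : T) : R :=
  (\sum_(1 <= i < t.+1 | H0 i && (E i <= t)%N) (((pv i x <= lev i x)%R : bool) : nat)%:R).

(* mFDR(t) = E|V(t)| / E[|R(t)| v 1]  (both expectations are finite: the
   integrands are bounded by t). *)
Definition mFDR {d} {T : measurableType d} {R : realType} (Pr : probability T R)
  (H0 : pred nat) (E : nat -> nat) (pv lev : nat -> T -> R) (t : nat) : R :=
  fine ('E_Pr[numV H0 E pv lev t])%E /
  fine ('E_Pr[fun x => Num.max (numR E pv lev t x) 1%R])%E.

(* FDP*(t) = (sum_{j<=t, j in H0} alpha_j) / ((sum_{j : E_j <= t} R_j) v 1).
   Since E_j >= j, {j : E_j <= t} is contained in [t]. *)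
Definition FDPstar {T} {R : realType} (H0 : pred nat) (E : nat -> nat)
  (pv lev : nat -> T -> R) (t : nat) (x : T) : R :=
  (\sum_(1 <= j < t.+1 | H0 j) lev j x) / Num.max (numR E pv lev t x) 1.

(* The level alpha_j is F^{-X^j}-measurable, and F^{-X^j} is contained in
   F^{-X^{E_j}} since the lags grow by at most one per step; as P_j is
   superuniform given F^{-X^{E_j}}, every true null is rejected with
   probability P(P_j <= alpha_j) <= E[alpha_j]. Summing over the true nulls
   decided by time t, E|V(t)| <= E[sum_{j <= t, j in H^0} alpha_j], and the
   almost sure bound FDP*(t) <= alpha turns the right-hand side into
   alpha E[|R(t)| v 1]. *)

From HB Require Import structures.
From mathcomp Require Import all_boot all_order all_algebra.
From mathcomp Require Import all_classical all_reals all_analysis measurable_realfun.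
From mathcomp Require Import zify.
Set Implicit Arguments. Unset Strict Implicit. Unset Printing Implicit Defensive.
Import Order.TTheory GRing.Theory Num.Theory.
Local Open Scope classical_set_scope.
Local Open Scope ring_scope.

Section conflict_sets.
Variables (E L : nat -> nat).
Hypothesis lagS : forall t, (L t.+1 <= (L t).+1)%N.

Lemma lag_addn_le j m : (L (j + m) <= L j + m)%N.
Proof.
elim: m => [|m IH]; first by rewrite !addn0.
by rewrite !addnS (leq_trans (lagS _)).
Qed.

Lemma not_conflict_mono i j k :
  (j <= k)%N -> not_conflict E L j i -> not_conflict E L k i.
Proof.
move=> jk /and4P[i1 ij Eij iLj]; apply/and4P; split => //; try lia.
have := lag_addn_le j (k - j); rewrite subnKC //; lia.
Qed.

Lemma F_minusX_mono d (T : measurableType d) (R : realType) (withC : bool)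
    (pv lev lam : nat -> T -> R) j k : (j <= k)%N ->
  F_minusX withC E L pv lev lam j `<=` F_minusX withC E L pv lev lam k.
Proof.
move=> jk; apply: sub_smallest2r; first exact: smallest_sigma_algebra.
by move=> A [i [ncj HA]]; exists i; split => //; exact: not_conflict_mono ncj.
Qed.

End conflict_sets.

Lemma probability_ae_witness d (T : measurableType d) (R : realType)
    (P : probability T R) (Q : T -> Prop) :
  {ae P, forall x, Q x} -> exists x, Q x.
Proof.
case=> N [mN PN0 notQN]; apply: contrapT => noQ.
have : (P setT <= P N)%E.
  apply: le_measure; rewrite ?inE // => x _.
  by apply: notQN => Qx; apply: noQ; exists x.
by rewrite PN0 probability_setT lee_fin ler10.
Qed.

Lemma ge0_expectation_sum d (T : measurableType d) (R : realType)
    (P : probability T R) (I : Type) (s : seq I) (Q : pred I) (X : I -> T -> R) :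
    (forall i, measurable_fun setT (X i)) -> (forall i x, 0 <= X i x) ->
  ('E_P[fun x => (\sum_(i <- s | Q i) X i x)%R] = \sum_(i <- s | Q i) 'E_P[X i])%E.
Proof.
move=> mX X0; rewrite unlock -big_filter.
under eq_integral do rewrite -big_filter -sumEFin.
rewrite ge0_integral_sum //; first by move=> i; exact/measurable_EFinP.
by move=> i x _; rewrite lee_fin.
Qed.

Lemma ge0_expectationZl d (T : measurableType d) (R : realType)
    (P : probability T R) (X : T -> R) (k : R) :
    0 <= k -> measurable_fun setT X -> (forall x, 0 <= X x) ->
  ('E_P[fun x => (k * X x)%R] = k%:E * 'E_P[X])%E.
Proof.
move=> k0 mX X0; rewrite unlock; under eq_integral do rewrite EFinM.
rewrite ge0_integralZl_EFin //; first by move=> x _; rewrite lee_fin.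
exact/measurable_EFinP.
Qed.

Lemma measurable_sum_cond d (T : measurableType d) (R : realType) (D : set T)
    (I : Type) (s : seq I) (Q : pred I) (h : I -> T -> R) :
    (forall i, measurable_fun D (h i)) ->
  measurable_fun D (fun x => \sum_(i <- s | Q i) h i x).
Proof. by move=> mh; under eq_fun do rewrite -big_filter; exact: measurable_sum. Qed.

Lemma fine_div_le (R : realType) (a b : \bar R) (alpha : R) :
  (0 <= a)%E -> (a <= alpha%:E * b)%E -> (1 <= b)%E -> (b < +oo)%E ->
  fine a / fine b <= alpha.
Proof.
move=> a0 ab b1 boo.
have b_fin : b \is a fin_num by rewrite ge0_fin_numE // (le_trans lee01 b1).
have a_fin : a \is a fin_num.
  by rewrite ge0_fin_numE // (le_lt_trans ab) // -(fineK b_fin) -EFinM ltry.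
move: ab b1; rewrite -(fineK a_fin) -(fineK b_fin) -EFinM !lee_fin => ab b1.
by rewrite ler_pdivrMr ?(lt_le_trans ltr01 b1) // mulrC.
Qed.

Section superuniform_level.
Context d (T : measurableType d) (R : realType) (P : probability T R).
Variables (G : set (set T)) (p l : T -> R).
Hypotheses (mp : measurable_fun setT p) (ml : measurable_fun setT l).
Hypotheses (l_ge0 : forall x, 0 <= l x) (l_lt1 : forall x, l x < 1).
Hypothesis lG : measurable_wrt G l.
Hypothesis p_superuniform : forall u : R, 0 <= u <= 1 -> forall A, G A ->
  (P (A `&` [set x | (p x <= u)%R]) <= u%:E * P A)%E.

(* Round [l] up to the grid of mesh [1/N]: on each cell where the rounded
   level is the constant [c k] the cell lies in [G], so superuniformity
   applies cell by cell, at a cost of [1/N] in expectation. *)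
Section grid.
Variable n : nat.
Let N : R := n.+1%:R.
Let c k : R := k.+1%:R / N.

Let cell (k : nat) : set T := [set x | Num.truncn (l x * N) = k].

Let grid_interval k : set R := ( *%R^~ N) @^-1` [set` `[k%:R, k.+1%:R[%R].

Let measurable_grid_interval k : measurable (grid_interval k).
Proof.
rewrite -[X in measurable X]setTI.
by apply: mulrr_measurable => //; exact: measurable_itv.
Qed.

Let cellE k : cell k = l @^-1` grid_interval k.
Proof.
apply/seteqP; split => x; rewrite /cell /grid_interval /= in_itv /=;
  by rewrite -truncn_eq ?mulr_ge0 // => /eqP.
Qed.

Let measurable_cell k : measurable (cell k).
Proof. by rewrite cellE -[X in measurable X]setTI; exact: ml. Qed.

Let G_cell k : G (cell k).
Proof. by rewrite cellE; exact: lG. Qed.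

Let cover_cells : \big[setU/set0]_(k <- iota 0 n.+1) cell k = setT.
Proof.
apply/seteqP; split => // x _; rewrite -bigcup_seq.
exists (Num.truncn (l x * N)) => //; rewrite /mkset mem_iota leq0n add0n.
by rewrite truncn_lt_nat ?mulr_ge0 // -/N gtr_pMl ?ltr0n ?l_lt1.
Qed.

Let integral_over_cells (f : T -> \bar R) :
    measurable_fun setT f -> (forall x, 0 <= f x)%E ->
  (\int[P]_x f x = \sum_(k < n.+1) \int[P]_(x in cell k) f x)%E.
Proof.
move=> mf f0; rewrite -cover_cells ge0_integral_bigsetU ?iota_uniq ?cover_cells //.
- by rewrite -[iota 0 n.+1]/(index_iota 0 n.+1) big_mkord.
- by move=> i j _ _ [x [<- <-]].
Qed.

Lemma prob_le_grid_sum :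
  (P [set x | (p x <= l x)%R] <= \sum_(k < n.+1) (c k)%:E * P (cell k))%E.
Proof.
set A := [set x | _].
have mA : measurable A.
  by rewrite -[X in measurable X]setTI; apply: measurable_fun_le.
rewrite -[A]setIT -integral_indic // integral_over_cells //; last first.
  by apply/measurable_EFinP; exact: measurable_indic.
apply: lee_sum => k _; rewrite integral_indic // setIC.
have mpc : measurable [set x | p x <= c k].
  by rewrite -[X in measurable X]setTI; apply: measurable_fun_le.
have c01 : 0 <= c k <= 1.
  by rewrite divr_ge0 //= ler_pdivrMr ?ltr0n // mul1r ler_nat.
apply: le_trans (p_superuniform c01 (G_cell k)).
apply: le_measure; rewrite ?inE; try exact: measurableI.
move=> x [/= cellx Ax]; split => //=; apply: le_trans Ax _.
rewrite ler_pdivlMr ?ltr0n // -cellx; apply/ltW; exact: truncnS_gt.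
Qed.

Lemma grid_sum_le_expectation :
  (\sum_(k < n.+1) (c k)%:E * P (cell k) <= 'E_P[l] + N^-1%:E)%E.
Proof.
have N0 : 0 < N by rewrite ltr0n.
have -> : ('E_P[l] + N^-1%:E = \int[P]_x (l x + N^-1)%:E)%E.
  rewrite unlock; under [RHS]eq_integral do rewrite EFinD.
  rewrite ge0_integralD //.
  - by rewrite integral_cst //= probability_setT mule1.
  - by move=> x _; rewrite lee_fin l_ge0.
  - exact/measurable_EFinP.
  - by move=> x _; rewrite lee_fin invr_ge0 ltW.
rewrite integral_over_cells; last 2 first.
- by apply/measurable_EFinP; exact: measurable_funD.
- by move=> x; rewrite lee_fin addr_ge0 ?l_ge0 ?invr_ge0 ?ltW.
apply: lee_sum => k _; rewrite -integral_cst //.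
apply: ge0_le_integral => //.
- by move=> x _; rewrite lee_fin divr_ge0 ?ltW.
- by apply/measurable_funTS/measurable_EFinP; exact: measurable_funD.
move=> x /= cellx; rewrite lee_fin /c -addn1 natrD mulrDl mul1r lerD2r.
by rewrite ler_pdivrMr // -cellx truncn_le mulr_ge0 ?l_ge0 ?(ltW N0).
Qed.

End grid.

Lemma superuniform_prob_le_expectation :
  (P [set x | (p x <= l x)%R] <= 'E_P[l])%E.
Proof.
apply/lee_addgt0Pr => e e0.
apply: le_trans (prob_le_grid_sum (Num.truncn e^-1)) _.
apply: le_trans (grid_sum_le_expectation (Num.truncn e^-1)) _.
rewrite leeD2l // lee_fin -[leRHS]invrK lef_pV2 ?posrE ?invr_gt0 ?ltr0n //.
exact/ltW/truncnS_gt.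
Qed.

End superuniform_level.

Section online_testing.
Context d (T : measurableType d) (R : realType) (P : probability T R).
Variables (H0 : pred nat) (E : nat -> nat) (pv lev : nat -> T -> R).
Hypotheses (mpv : forall i, measurable_fun setT (pv i))
  (mlev : forall i, measurable_fun setT (lev i)).
Hypothesis lev_ge0 : forall i x, 0 <= lev i x.

Let rejected i : set T := [set x | pv i x <= lev i x].

Let measurable_rejected i : measurable (rejected i).
Proof. by rewrite -[X in measurable X]setTI; exact: measurable_fun_le. Qed.

Let rejected_indicE i x :
  (((pv i x <= lev i x)%R : bool) : nat)%:R = \1_(rejected i) x :> R.
Proof.
rewrite indicE; case: (boolP (pv i x <= lev i x)) => h.
- by rewrite mem_set.
- by rewrite memNset //; apply/negP.
Qed.

Lemma expectation_numV t : ('E_P[numV H0 E pv lev t] =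
  \sum_(1 <= i < t.+1 | H0 i && (E i <= t)%N) P (rejected i))%E.
Proof.
have -> : numV H0 E pv lev t =
    fun x => \sum_(1 <= i < t.+1 | H0 i && (E i <= t)%N) \1_(rejected i) x.
  by apply/funext => x; apply: eq_bigr => i _; exact: rejected_indicE.
rewrite ge0_expectation_sum.
- by apply: eq_bigr => i _; rewrite expectation_indic.
- by move=> i; exact: measurable_indic.
- by move=> i x; rewrite indicE ler0n.
Qed.

Lemma measurable_numR t : measurable_fun setT (numR E pv lev t).
Proof.
rewrite (_ : numR E pv lev t = fun x =>
    \sum_(1 <= i < t.+1 | (E i <= t)%N) \1_(rejected i) x).
  by apply: measurable_sum_cond => i; exact: measurable_indic.
by apply/funext => x; apply: eq_bigr => i _; exact: rejected_indicE.
Qed.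

Lemma numR_le t x : numR E pv lev t x <= t%:R.
Proof.
apply: (@le_trans _ _ (\sum_(1 <= i < t.+1) (1 : R))).
  rewrite /numR big_mkcond /=; apply: ler_sum => i _.
  by case: ifP => _ //; case: (pv i x <= lev i x).
by rewrite sumr_const_nat subn1.
Qed.

Let numR_max1 t x := Num.max (numR E pv lev t x) 1.

Let measurable_numR_max1 t : measurable_fun setT (numR_max1 t).
Proof. exact: measurable_maxr (measurable_numR t) (measurable_cst _). Qed.

Lemma expectation_numR_max1_ge1 t : (1 <= 'E_P[numR_max1 t])%E.
Proof.
rewrite -(expectation_cst P 1); apply: expectation_le => //.
- by move=> x; rewrite le_max ler01 orbT.
- by apply: aeW => x; rewrite le_max lexx orbT.
Qed.

Lemma expectation_numR_max1_lty t : ('E_P[numR_max1 t] < +oo)%E.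
Proof.
apply: (@le_lt_trans _ _ ('E_P[cst t.+1%:R])%E); last first.
  by rewrite expectation_cst ltry.
apply: expectation_le => //.
- by move=> x; rewrite le_max ler01 orbT.
- apply: aeW => x; rewrite ge_max ler1n andbT.
  by rewrite (le_trans (numR_le t x)) // ler_nat.
Qed.

Variables (t : nat) (alpha : R).
Hypothesis rejected_le : forall j, (0 < j)%N -> H0 j ->
  (P (rejected j) <= 'E_P[lev j])%E.
Hypothesis FDPstar_le : {ae P, forall x, FDPstar H0 E pv lev t x <= alpha}.

Lemma expectation_numV_le :
  ('E_P[numV H0 E pv lev t] <= alpha%:E * 'E_P[numR_max1 t])%E.
Proof.
have numR_max1_ge1 x : 1 <= numR_max1 t x by rewrite le_max lexx orbT.
have alpha_ge0 : 0 <= alpha.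
  have [x FDPx] := probability_ae_witness FDPstar_le.
  apply: le_trans FDPx; rewrite divr_ge0 //; first exact: sumr_ge0.
  exact: le_trans ler01 (numR_max1_ge1 x).
rewrite expectation_numV -ge0_expectationZl //; last first.
  by move=> x; exact: le_trans ler01 (numR_max1_ge1 x).
apply: (@le_trans _ _ (\sum_(1 <= i < t.+1 | H0 i) 'E_P[lev i])%E).
  apply: (@le_trans _ _
    (\sum_(1 <= i < t.+1 | H0 i && (E i <= t)%N) 'E_P[lev i])%E).
    rewrite big_nat_cond [leRHS]big_nat_cond.
    by apply: lee_sum => i /andP[/andP[i_gt0 _] /andP[H0i _]]; exact: rejected_le.
  apply: lee_sum_nneg_subset => [i /andP[] //|i _].
  exact: expectation_ge0.
rewrite -ge0_expectation_sum //; apply: expectation_le => //.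
- exact: measurable_sum_cond.
- exact: measurable_funM.
- by move=> x; exact: sumr_ge0.
- by move=> x; rewrite mulr_ge0 // (le_trans ler01 (numR_max1_ge1 x)).
- apply: filterS FDPstar_le => x.
  by rewrite /FDPstar ler_pdivrMr // (lt_le_trans ltr01 (numR_max1_ge1 x)).
Qed.

Lemma mFDR_le : mFDR P H0 E pv lev t <= alpha.
Proof.
apply: fine_div_le expectation_numV_le _ (expectation_numR_max1_lty t).
- by apply: expectation_ge0 => x; exact: sumr_ge0.
- exact: expectation_numR_max1_ge1.
Qed.

End online_testing.

Theorem proposition1 (d : measure_display) (T : measurableType d) (R : realType)
  (Pr : probability T R) (withC : bool)
  (H0 : pred nat) (E L : nat -> nat) (pv lev lam : nat -> T -> R) (alpha : R)
  (hE : forall t, (t <= E t)%N)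
  (hL : forall t, (L t.+1 <= (L t).+1)%N)
  (hpv : forall t, measurable_fun setT (pv t))
  (hlev : forall t, measurable_fun setT (lev t))
  (hlam : forall t, measurable_fun setT (lam t))
  (hlam_range : forall t x, lev t x <= lam t x /\ lam t x < 1)
  (hlev0 : forall j x, 0 <= lev j x)
  (hlevF : forall j, (0 < j)%N -> measurable_wrt (F_minusX withC E L pv lev lam j) (lev j))
  (hsuper : forall t, (0 < t)%N -> H0 t -> forall u : R, 0 <= u <= 1 ->
     forall A, F_minusX withC E L pv lev lam (E t) A ->
     (Pr (A `&` [set x | (pv t x <= u)%R]) <= u%:E * Pr A)%E) :
  forall t : nat,
    {ae Pr, forall x, FDPstar H0 E pv lev t x <= alpha} ->
    mFDR Pr H0 E pv lev t <= alpha.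
Proof.
move=> t FDPstar_le; apply: (mFDR_le hpv hlev hlev0 _ FDPstar_le) => j j_gt0 H0j.
have lev_lt1 x : lev j x < 1 by have [/le_lt_trans] := hlam_range j x; apply.
apply: (superuniform_prob_le_expectation (hpv j) (hlev j) (hlev0 j) lev_lt1 _
  (hsuper j j_gt0 H0j)) => B mB.
apply: (F_minusX_mono hL (hE j)); exact: hlevF.
Qed.
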